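(* Let $G$ be a $6$-regular graph, $\mathcal S$ a canonical path partition of $G$, and let $x_1,x_2\in V_2$ be path neighbors on a path component $P$. Suppose both $x_1$ and $x_2$ go to vertices of the same cycle component $C$. Then for every spanning cycle $H$ of the subgraph of $G$ induced on $V(C)$, there are no vertices $a,b\in V(C)$ such that $x_1$ goes to $a$, $x_2$ goes to $b$, and $a,b$ are consecutive on $H$. Moreover, if $|V(C)|\le 6$, then the number of balanced edges between $\{x_1,x_2\}$ and $V(C)$ is at most $|V(C)|$ (equivalently, $\{x_1,x_2\}$ transfer in total at most $1$ point to $C$ when each such balanced edge carries $1/|V(C)|$ points).
   Context: All graphs are finite, simple and undirected. A path partition of $G=(V,E)$ is a set of vertex-disjoint paths (single vertices allowed) covering $V$; its members are components. A component with $t\ge3$ vertices is a cycle component if the subgraph induced on its vertex set has a spanning cycle; a one-vertex component is an isolated vertex; every other component is a path component. A path partition is canonical if (1) it has the minimum number of components among all path partitions of $G$; (2) among those, it has the maximum number of cycle components; (3) it has no isolated vertices. Given a canonical path partition $\mathcal S$ of $G$: two vertices are path neighbors if they are consecutive on a path component. An edge of $G$ is a free edge unless it joins two path neighbors or has both endpoints in the same cycle component. $V_1$ is the set of end-vertices of path components together with all vertices of cycle components. $V_2$ is the set of vertices not in $V_1$ that are joined by a free edge to a vertex of $V_1$. A balanced edge is a free edge with one endpoint in $V_1$ and the other in $V_2$; for $x\in V_2$, $y\in V_1$ we say $x$ goes to $y$ if $xy$ is a balanced edge. *)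

(* A simple graph on a finite vertex type T is a symmetric,
   irreflexive boolean relation e : rel T. *)
From mathcomp Require Import all_boot.
Set Implicit Arguments. Unset Strict Implicit. Unset Printing Implicit Defensive.

Section PathPartitions.
Variables (T : finType) (e : rel T).

Definition is_gpath (p : seq T) : bool :=
  if p is x :: q then uniq p && path e x q else false.

Definition path_partition (P : seq (seq T)) : bool :=
  all is_gpath P && perm_eq (flatten P) (enum T).

Definition spanning_cycle (p H : seq T) : bool :=
  perm_eq H p && cycle e H.

Definition is_cycle_comp (p : seq T) : bool :=
  (3 <= size p) && has (spanning_cycle p) (permutations p).

Definition is_isolated (p : seq T) : bool := size p == 1.

Definition is_path_comp (p : seq T) : bool :=
  (2 <= size p) && ~~ is_cycle_comp p.

Definition canonical_pp (P : seq (seq T)) : Prop :=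
  [/\ path_partition P,
      (forall Q, path_partition Q -> size P <= size Q),
      (forall Q, path_partition Q -> size Q = size P ->
          count is_cycle_comp Q <= count is_cycle_comp P)
    & all (fun p => ~~ is_isolated p) P].

Definition consec (p : seq T) (x y : T) : bool :=
  ((x, y) \in zip p (behead p)) || ((y, x) \in zip p (behead p)).

Definition cyc_consec (H : seq T) (a b : T) : bool :=
  ((a, b) \in zip H (rot 1 H)) || ((b, a) \in zip H (rot 1 H)).

Variable P : seq (seq T).

Definition path_nbrs (x y : T) : bool :=
  has (fun p => is_path_comp p && consec p x y) P.

Definition same_cycle_comp (x y : T) : bool :=
  has (fun p => [&& is_cycle_comp p, x \in p & y \in p]) P.

Definition free_edge (x y : T) : bool :=
  [&& e x y, ~~ path_nbrs x y & ~~ same_cycle_comp x y].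

Definition inV1 (x : T) : bool :=
  has (fun p => (is_path_comp p && ((x == head x p) || (x == last x p)))
                || (is_cycle_comp p && (x \in p))) P.

Definition inV2 (x : T) : bool :=
  ~~ inV1 x && [exists y, inV1 y && free_edge x y].

(* x (in V2) goes to y (in V1): xy is a balanced edge *)
Definition goes_to (x y : T) : bool :=
  [&& inV2 x, inV1 y & free_edge x y].

End PathPartitions.

Definition regular (T : finType) (e : rel T) (k : nat) : Prop :=
  forall x : T, #|[set y | e x y]| = k.

From mathcomp Require Import all_boot.
Set Implicit Arguments. Unset Strict Implicit. Unset Printing Implicit Defensive.

(* If x1 -- x2 is an edge of a path component p and a spanning cycle of a
   cycle component C has an edge a -- b with x1 ~ a and x2 ~ b, then cutting
   that cycle edge yields a Hamiltonian path of C from a to b, which can be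
   spliced into p between x1 and x2.  This merges two components into one,
   contradicting the minimality of a canonical path partition.  Hence, on a
   spanning cycle H of C, no vertex that x2 goes to is the successor of a
   vertex that x1 goes to; since the successor map of H is injective, the two
   sets of targets have total size at most |V(C)|. *)

Section SeqFacts.
Variable T : eqType.

Lemma mem_zip_next_at (y0 y : T) (s : seq T) a b : uniq (y :: s) ->
  ((a, b) \in zip (y :: s) (rcons s y0)) = (a \in y :: s) && (b == next_at a y0 y s).
Proof.
elim: s y => [|z s IH] y; first by rewrite /= !inE xpair_eqE; case: (a =P y).
move=> /andP[yNs uniq_s].
have -> : zip (y :: z :: s) (rcons (z :: s) y0) = (y, z) :: zip (z :: s) (rcons s y0) by [].
rewrite (in_cons (y, z)) (IH z uniq_s) xpair_eqE (in_cons y) /=.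
by case: (a =P y) => [->|] //=; rewrite (negbTE yNs) orbF.
Qed.

Lemma mem_zip_rot1 (H : seq T) a b : uniq H ->
  ((a, b) \in zip H (rot 1 H)) = (a \in H) && (b == next H a).
Proof. by case: H => [|h t] //= uH; rewrite rot1_cons mem_zip_next_at. Qed.

Lemma mem_zip_behead_split (s : seq T) u v : (u, v) \in zip s (behead s) ->
  exists p1 p2, s = p1 ++ u :: v :: p2.
Proof.
elim: s => [|x s IH] //=; case: s IH => [|y s] IH //=.
rewrite in_cons => /orP[/eqP[-> ->]|/IH [p1 [p2 ->]]]; first by exists [::], s.
by exists (x :: p1), p2.
Qed.

(* [next H] is injective on [H], so it maps the A-vertices of [H] into
   non-B-vertices of [H] without collisions. *)
Lemma count_next_le_size (H : seq T) (A B : pred T) : uniq H ->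
  {in H, forall a, A a -> ~~ B (next H a)} -> count A H + count B H <= size H.
Proof.
move=> uH AnextNB.
have uniq_targets : uniq (map (next H) (filter A H) ++ filter B H).
  rewrite cat_uniq (map_inj_uniq (can_inj (prev_next uH))) !filter_uniq //= andbT.
  apply/hasPn => b; rewrite mem_filter => /andP[Bb _].
  apply/mapP => -[a]; rewrite mem_filter => /andP[Aa aH] def_b.
  by move: (AnextNB a aH Aa); rewrite -def_b Bb.
have := uniq_leq_size uniq_targets.
rewrite size_cat size_map !size_filter; apply=> x; rewrite mem_cat mem_filter.
by case/orP=> [/mapP[a] | /andP[]] //; rewrite mem_filter => /andP[_ aH] ->; rewrite mem_next.
Qed.

End SeqFacts.

Section HamiltonianPaths.
Variables (T : eqType) (e : rel T).

Definition ham_path (C : seq T) (y z : T) : Prop :=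
  exists q, [/\ perm_eq (y :: q) C, path e y q & last y q = z].

Lemma ham_path_perm (C C' : seq T) y z :
  perm_eq C C' -> ham_path C y z -> ham_path C' y z.
Proof. by move=> CC' [q [Cq eq lq]]; exists q; split=> //; apply: perm_trans CC'. Qed.

Lemma ham_path_rev (C : seq T) y z : symmetric e -> ham_path C y z -> ham_path C z y.
Proof.
move=> e_sym [q [Cq eq <-]]; exists (rev (belast y q)).
have rev_yq : last y q :: rev (belast y q) = rev (y :: q).
  by rewrite [y :: q]lastI rev_rcons.
split.
- by rewrite rev_yq perm_rev.
- by rewrite rev_path; apply: sub_path eq => u v; rewrite e_sym.
- by rewrite -(last_cons y) rev_yq rev_cons last_rcons.
Qed.

(* Deleting the cycle edge a -> b leaves the path from b around to a. *)
Lemma ham_path_cycle_edge (H : seq T) a b : uniq H -> cycle e H ->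
  (a, b) \in zip H (rot 1 H) -> ham_path H b a.
Proof.
move=> uH cH; rewrite mem_zip_rot1 // => /andP[aH /eqP ->].
have [i s defH] := rot_to aH.
rewrite -(next_rot i uH) defH.
apply: (ham_path_perm (_ : perm_eq (a :: s) H)); first by rewrite -defH perm_rot.
have : cycle e (a :: s) by rewrite -defH rot_cycle.
case: s {defH} => [|c s] /=; rewrite eqxx; first by exists [::].
move=> /andP[_ cs]; exists (rcons s a); split=> //; last by rewrite last_rcons.
by rewrite -rcons_cons -rot1_cons perm_rot.
Qed.

Lemma sorted_splice (p1 p2 q : seq T) u v y :
  sorted e (p1 ++ u :: v :: p2) -> e u y -> path e y q -> e (last y q) v ->
  sorted e (p1 ++ u :: y :: q ++ v :: p2).
Proof.
move=> sp euy yq ezv.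
have splice x0 p0 : path e x0 (p0 ++ u :: v :: p2) ->
    path e x0 (p0 ++ u :: y :: q ++ v :: p2).
  by rewrite !cat_path /= cat_path /= euy yq ezv => /and3P[-> -> /andP[_ ->]].
case: p1 sp splice => [|x p1] /= sp splice; last exact: splice.
by move: sp => /andP[_ vp2]; rewrite euy cat_path yq /= ezv vp2.
Qed.

End HamiltonianPaths.

Section SplicingComponents.
Variables (T : finType) (e : rel T).
Hypothesis e_sym : symmetric e.

Lemma gpathE (s : seq T) : is_gpath e s = [&& s != [::], uniq s & sorted e s].
Proof. by case: s. Qed.

Lemma goes_to_edge (P : seq (seq T)) x y : goes_to e P x y -> e x y.
Proof. by case/and3P=> _ _ /andP[]. Qed.

Lemma ham_path_spanning_cycle (C H : seq T) a b : uniq C ->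
  spanning_cycle e C H -> cyc_consec H a b -> ham_path e C a b.
Proof.
move=> uC /andP[HC cH] ab; have uH : uniq H by rewrite (perm_uniq HC).
apply: ham_path_perm HC _.
by case/orP: ab => /(ham_path_cycle_edge uH cH) //; apply: ham_path_rev.
Qed.

Lemma path_partition_splice (P : seq (seq T)) (p C p1 p2 : seq T) u v y z :
  path_partition e P -> p \in P -> C \in P -> p != C ->
  p = p1 ++ u :: v :: p2 -> e u y -> e z v -> ham_path e C y z ->
  exists2 Q, path_partition e Q & size Q < size P.
Proof.
move=> /andP[gpathsP coverP] pP CP pNC def_p euy ezv [q [Cq yq lq]].
set r := p1 ++ u :: y :: q ++ v :: p2; set R := rem C (rem p P).
have CPp : C \in rem p P.
  by move: CP; rewrite (perm_mem (perm_to_rem pP)) in_cons eq_sym (negbTE pNC).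
have PpCR : perm_eq P [:: p, C & R].
  by apply: perm_trans (perm_to_rem pP) _; rewrite perm_cons (perm_to_rem CPp).
have r_pC : perm_eq r (p ++ C).
  rewrite /r def_p -catA perm_cat2l -[u :: y :: _]/(u :: ((y :: q) ++ v :: p2)).
  by rewrite -[(u :: _) ++ C]/(u :: ((v :: p2) ++ C)) perm_cons perm_catC perm_cat2l.
have coverQ : perm_eq (flatten (r :: R)) (enum T).
  have r_R_pCR : perm_eq (flatten (r :: R)) (flatten [:: p, C & R]).
    by rewrite /= catA perm_cat2r r_pC.
  have pCR_P : perm_eq [:: p, C & R] P by rewrite perm_sym.
  exact: perm_trans (perm_trans r_R_pCR (perm_flatten pCR_P)) coverP.
have ur : uniq r.
  by move: (perm_uniq coverQ); rewrite enum_uniq /= cat_uniq => /and3P[].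
have sr : sorted e r.
  apply: sorted_splice => //; last by rewrite lq.
  by move/allP: gpathsP => /(_ p pP); rewrite gpathE def_p => /and3P[].
exists (r :: R); last by rewrite (perm_size PpCR).
have r_nonempty : r != [::] by rewrite /r; case: (p1).
rewrite /path_partition coverQ andbT /= gpathE r_nonempty ur sr /=.
by apply/allP => s /mem_rem /mem_rem; move/allP: gpathsP; apply.
Qed.

Lemma canonical_no_ham_path (P : seq (seq T)) (p C : seq T) x1 x2 a b :
  canonical_pp e P -> p \in P -> C \in P -> p != C ->
  consec p x1 x2 -> e x1 a -> e x2 b -> ~ ham_path e C a b.
Proof.
case=> ppP minP _ _ pP CP pNC x12 x1a x2b Cab.
have splice u v y z : p = _ ++ u :: v :: _ -> e u y -> e z v -> ham_path e C y z -> False.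
  move=> def_p uy zv Cyz.
  have [Q ppQ] := path_partition_splice ppP pP CP pNC def_p uy zv Cyz.
  by rewrite ltnNge minP.
case/orP: x12 => /mem_zip_behead_split[p1 [p2 def_p]].
  by apply: splice def_p x1a _ Cab; rewrite e_sym.
by apply: splice def_p x2b _ (ham_path_rev e_sym Cab); rewrite e_sym.
Qed.

End SplicingComponents.

Theorem mainTheorem10 (T : finType) (e : rel T)
  (e_sym : symmetric e) (e_irr : irreflexive e) (e_reg : regular e 6)
  (P : seq (seq T)) (hP : canonical_pp e P)
  (x1 x2 : T) (hx1 : inV2 e P x1) (hx2 : inV2 e P x2)
  (p : seq T) (hp : p \in P) (hpc : is_path_comp e p) (hnb : consec p x1 x2)
  (C : seq T) (hC : C \in P) (hCc : is_cycle_comp e C)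
  (ha : has (goes_to e P x1) C) (hb : has (goes_to e P x2) C) :
  (forall H : seq T, spanning_cycle e C H ->
     ~ (exists a b : T, [/\ a \in C, b \in C, goes_to e P x1 a,
                          goes_to e P x2 b & cyc_consec H a b]))
  /\ (size C <= 6 -> count (goes_to e P x1) C + count (goes_to e P x2) C <= size C).
Proof.
have uC : uniq C.
  by case: hP => /andP[/allP/(_ C hC)] + _ _ _ _; rewrite gpathE => /and3P[].
have pNC : p != C by apply: contraTneq hpc => ->; rewrite /is_path_comp hCc andbF.
have no_consec H : spanning_cycle e C H ->
    ~ (exists a b, [/\ a \in C, b \in C, goes_to e P x1 a,
                     goes_to e P x2 b & cyc_consec H a b]).
  move=> CH [a [b [_ _ /goes_to_edge x1a /goes_to_edge x2b ab]]].
  exact: (canonical_no_ham_path e_sym hP hp hC pNC hnb x1a x2b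
           (ham_path_spanning_cycle e_sym uC CH ab)).
split=> // _; case/andP: hCc => _ /hasP[H _ CH].
have HC := (andP CH).1; have uH : uniq H by rewrite (perm_uniq HC).
rewrite -(perm_size HC) -!(permP HC).
apply: count_next_le_size => // a aH x1a; apply/negP => x2na.
apply: (no_consec H CH); exists a, (next H a).
by rewrite -!(perm_mem HC) mem_next /cyc_consec mem_zip_rot1 // aH eqxx.
Qed.
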